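(* For parameters $a>0$, $b>0$, $L>0$, call a barrier a pair $(\phi,\psi)$ solving $$-\phi''=\phi(1-\phi-a\psi),\quad -\psi''=\psi(1-b\phi-\psi)\ \text{ in }(0,L),\qquad \phi(0)=\phi(L)=0,\ \psi(0)=\psi(L)=1,$$ with $0<\phi(x)<1$ and $0<\psi(x)<1$ for all $x\in(0,L)$. Suppose a barrier exists for the parameters $\bar a,\bar b,\bar L$ (with $\bar a>0$, $\bar b>\max\{\bar a,1\}$, $\bar L>0$). Then: 1. for all $L\ge\bar L$ a barrier exists for the parameters $\bar a,\bar b,L$; 2. for all $b\ge\bar b$ a barrier exists for the parameters $\bar a,b,\bar L$; 3. for all $a\le\bar a$ (with $a>0$) a barrier exists for the parameters $a,\bar b,\bar L$. *)

From Stdlib Require Import Reals.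
From Coquelicot Require Import Coquelicot.
Open Scope R_scope.

Definition cont_on_closed (L : R) (f : R -> R) (x : R) : Prop :=
  filterlim f (within (fun y => 0 <= y <= L) (locally x)) (locally (f x)).

Definition is_barrier (a b L : R) (phi psi : R -> R) : Prop :=
  (forall x, 0 <= x <= L -> cont_on_closed L phi x /\ cont_on_closed L psi x) /\
  (forall x, 0 < x < L ->
     ex_derive phi x /\ ex_derive (Derive phi) x /\
     ex_derive psi x /\ ex_derive (Derive psi) x /\
     - Derive (Derive phi) x = phi x * (1 - phi x - a * psi x) /\
     - Derive (Derive psi) x = psi x * (1 - b * phi x - psi x) /\
     0 < phi x < 1 /\ 0 < psi x < 1) /\
  phi 0 = 0 /\ phi L = 0 /\ psi 0 = 1 /\ psi L = 1.

Definition barrier_exists (a b L : R) : Prop :=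
  exists phi psi : R -> R, is_barrier a b L phi psi.

From Stdlib Require Import Reals Lra Psatz.
From Coquelicot Require Import Coquelicot.
Open Scope R_scope.

(* With [k = 2 + a + b] and [M = k^2] the system reads
   [-phi'' + M phi = reaction M a phi psi], [-psi'' + M psi = reaction M b psi phi], and on
   [[0,1]^2] [reaction M a p q] increases in [p] and decreases in [q].  Starting from [(1, 0)] and
   solving the linear Dirichlet problems by Green's formula, the comparison principle for
   [-u'' + M u] shows that [phi_n] decreases, [psi_n] increases, both stay in [[0,1]], and on
   [[0, Lbar]] they stay above, resp. below, the given barrier, which for a smaller [a], a larger
   [b] or a longer interval is a sub-/supersolution pair.  The iterates are equi-Lipschitz, so they
   converge uniformly and the limit is a fixed point of Green's formula, i.e. a solution; the strict
   bounds [0 < phi, psi < 1] follow by comparison with [sinh (k (d - x))]. *)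

Lemma is_derive_sinh_scal k x : is_derive (fun y => sinh (k*y)) x (k * cosh (k*x)).
Proof. unfold sinh, cosh. auto_derive; [easy | field]. Qed.

Lemma is_derive_cosh_scal k x : is_derive (fun y => cosh (k*y)) x (k * sinh (k*x)).
Proof. unfold sinh, cosh. auto_derive; [easy | field]. Qed.

Lemma is_derive_sinh_refl k L x :
  is_derive (fun y => sinh (k*(L-y))) x (- k * cosh (k*(L-x))).
Proof. unfold sinh, cosh. auto_derive; [easy | unfold Rminus; field]. Qed.

Lemma is_derive_cosh_refl k L x :
  is_derive (fun y => cosh (k*(L-y))) x (- k * sinh (k*(L-x))).
Proof. unfold sinh, cosh. auto_derive; [easy | unfold Rminus; field]. Qed.

Lemma sinh_pos x : 0 < x -> 0 < sinh x.
Proof. intros Hx. rewrite <- sinh_0. now apply sinh_lt. Qed.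

Lemma sinh_nonneg x : 0 <= x -> 0 <= sinh x.
Proof. intros [Hx | <-]; [now apply Rlt_le, sinh_pos | rewrite sinh_0; lra]. Qed.

Lemma sinh_plus x y : sinh (x + y) = sinh x * cosh y + cosh x * sinh y.
Proof.
  unfold sinh, cosh. rewrite Ropp_plus_distr, !exp_plus, !exp_Ropp.
  pose proof (exp_pos x). pose proof (exp_pos y). field; lra.
Qed.

Lemma exp_le_compat x y : x <= y -> exp x <= exp y.
Proof. intros [H | ->]; [now apply Rlt_le, exp_increasing | apply Rle_refl]. Qed.

Lemma sinh_cosh_le_exp x B : 0 <= x <= B -> 0 <= sinh x <= exp B /\ 0 <= cosh x <= exp B.
Proof.
  intros Hx. pose proof (sinh_nonneg x (proj1 Hx)).
  assert (exp (- x) <= exp x) by (apply exp_le_compat; lra).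
  assert (exp x <= exp B) by (apply exp_le_compat; lra).
  pose proof (exp_pos (- x)). unfold sinh, cosh in *. lra.
Qed.

Lemma is_derive_Rmult (f g : R -> R) (x df dg : R) :
  is_derive f x df -> is_derive g x dg ->
  is_derive (fun t => f t * g t) x (df * g x + f x * dg).
Proof. intros Hf Hg. apply (is_derive_mult f g x df dg Hf Hg), Rmult_comm. Qed.

Lemma is_derive_Rplus (f g : R -> R) (x df dg : R) :
  is_derive f x df -> is_derive g x dg -> is_derive (fun t => f t + g t) x (df + dg).
Proof. intros Hf Hg. exact (is_derive_plus f g x df dg Hf Hg). Qed.

Lemma is_derive_Rminus (f g : R -> R) (x df dg : R) :
  is_derive f x df -> is_derive g x dg -> is_derive (fun t => f t - g t) x (df - dg).
Proof. intros Hf Hg. exact (is_derive_minus f g x df dg Hf Hg). Qed.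

Lemma is_derive_ext_R (f g : R -> R) (x l : R) :
  (forall t, f t = g t) -> is_derive f x l -> is_derive g x l.
Proof. apply is_derive_ext. Qed.

Lemma RInt_point_R (f : R -> R) a : RInt f a a = 0.
Proof. exact (RInt_point a f). Qed.

Lemma ex_RInt_continuous_R (f : R -> R) a b : (forall x, continuous f x) -> ex_RInt f a b.
Proof. intros Hf. apply (ex_RInt_continuous (V := R_CompleteNormedModule)); auto. Qed.

Lemma Rabs_mult_le a b A B : Rabs a <= A -> Rabs b <= B -> Rabs (a * b) <= A * B.
Proof. intros. rewrite Rabs_mult. apply Rmult_le_compat; auto; apply Rabs_pos. Qed.

Lemma is_lim_seq_lb (u : nat -> R) (l A : R) : is_lim_seq u l -> (forall n, A <= u n) -> A <= l.
Proof. intros Hu HA. exact (is_lim_seq_le (fun _ => A) u A l HA (is_lim_seq_const A) Hu). Qed.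

Lemma is_lim_seq_ub (u : nat -> R) (l B : R) : is_lim_seq u l -> (forall n, u n <= B) -> l <= B.
Proof. intros Hu HB. exact (is_lim_seq_le u (fun _ => B) l B HB Hu (is_lim_seq_const B)). Qed.

Lemma is_lim_seq_unique_R (u : nat -> R) (l1 l2 : R) : is_lim_seq u l1 -> is_lim_seq u l2 -> l1 = l2.
Proof. intros H1 H2. apply is_lim_seq_unique in H1, H2. rewrite H1 in H2. now injection H2. Qed.

Lemma continuous_of_lipschitz (f : R -> R) C x :
  (forall y, Rabs (f y - f x) <= C * Rabs (y - x)) -> continuous f x.
Proof.
  intros Hf. apply continuity_pt_filterlim. intros eps Heps.
  set (K := Rabs C + 1). assert (HK : 0 < K) by (unfold K; pose proof (Rabs_pos C); lra).
  exists (eps / K). split; [apply Rdiv_lt_0_compat; lra|].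
  intros y [_ Hy]. cbn in *. unfold R_dist in *.
  apply Rle_lt_trans with (K * Rabs (y - x)).
  - eapply Rle_trans; [apply Hf|]. apply Rmult_le_compat_r; [apply Rabs_pos|].
    unfold K. pose proof (Rle_abs C). lra.
  - apply Rmult_lt_reg_l with (/ K); [now apply Rinv_0_lt_compat|].
    rewrite <- Rmult_assoc, Rinv_l, Rmult_1_l by lra. unfold Rdiv in Hy. lra.
Qed.

Definition continuous_on_Icc (c d : R) (f : R -> R) (x : R) : Prop :=
  filterlim f (within (fun y => c <= y <= d) (locally x)) (locally (f x)).

Lemma continuous_on_Icc_of_continuous c d f x : continuous f x -> continuous_on_Icc c d f x.
Proof.
  intros Hf P HP. unfold within, filtermap.
  apply (filter_imp (fun y => P (f y))); [auto | exact (Hf P HP)].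
Qed.

Definition clamp (c d x : R) : R := Rmax c (Rmin d x).

Lemma clamp_in c d x : c <= d -> c <= clamp c d x <= d.
Proof. intros. unfold clamp, Rmax, Rmin. repeat destruct Rle_dec; lra. Qed.

Lemma clamp_id c d x : c <= x <= d -> clamp c d x = x.
Proof. intros. unfold clamp, Rmax, Rmin. repeat destruct Rle_dec; lra. Qed.

Lemma clamp_lipschitz c d x y : c <= d -> Rabs (clamp c d x - clamp c d y) <= Rabs (x - y).
Proof.
  intros. pose proof (Rle_abs (x - y)). pose proof (Rle_abs (y - x)). rewrite Rabs_minus_sym in H1.
  unfold clamp, Rmax, Rmin. repeat destruct Rle_dec; apply Rabs_le; lra.
Qed.

Lemma continuous_clamp c d (f : R -> R) x : c <= d ->
  (forall y, c <= y <= d -> continuous_on_Icc c d f y) -> continuous (fun y => f (clamp c d y)) x.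
Proof.
  intros Hcd Hf P HP. destruct (Hf _ (clamp_in c d x Hcd) P HP) as [eps He].
  exists eps. intros y Hy. apply He; [|now apply clamp_in].
  eapply Rle_lt_trans; [apply clamp_lipschitz; lra | exact Hy].
Qed.

(** * Uniform convergence *)

Definition uniform_cvg_on (c d : R) (fn : nat -> R -> R) (f : R -> R) : Prop :=
  forall eps, 0 < eps -> exists N, forall n x, (N <= n)%nat -> c <= x <= d ->
    Rabs (fn n x - f x) <= eps.

Lemma lipschitz_of_pointwise_limit (fn : nat -> R -> R) (f : R -> R) c d C :
  (forall n x y, c <= x <= d -> c <= y <= d -> Rabs (fn n x - fn n y) <= C * Rabs (x - y)) ->
  (forall x, c <= x <= d -> is_lim_seq (fun n => fn n x) (f x)) ->
  forall x y, c <= x <= d -> c <= y <= d -> Rabs (f x - f y) <= C * Rabs (x - y).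
Proof.
  intros Hlip Hlim x y Hx Hy.
  pose proof (is_lim_seq_minus' _ _ _ _ (Hlim x Hx) (Hlim y Hy)) as Hxy.
  apply Rabs_le. split.
  - apply (is_lim_seq_lb _ _ _ Hxy). intros n.
    pose proof (Hlip n x y Hx Hy) as H. apply Rabs_le_between in H. cbn. lra.
  - apply (is_lim_seq_ub _ _ _ Hxy). intros n.
    pose proof (Hlip n x y Hx Hy) as H. apply Rabs_le_between in H. cbn. lra.
Qed.

Lemma uniform_cvg_0_of_equi_lipschitz (e : nat -> R -> R) c d K : 0 <= K ->
  (forall n x y, c <= x <= d -> c <= y <= d -> Rabs (e n x - e n y) <= K * Rabs (x - y)) ->
  (forall x, c <= x <= d -> is_lim_seq (fun n => e n x) 0) ->
  uniform_cvg_on c d e (fun _ => 0).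
Proof.
  intros HK Hlip Hlim eps Heps.
  destruct (Rle_or_lt c d) as [Hcd | Hdc]; [| exists 0%nat; intros; lra].
  set (del := eps / (2 * (K + 1))).
  assert (Hdel : 0 < del) by (unfold del; apply Rdiv_lt_0_compat; lra).
  assert (HKdel : K * del <= eps / 2).
  { apply Rle_trans with ((K + 1) * del); [nra | unfold del; right; field; lra]. }
  assert (Hpt : forall y, c <= y <= d -> exists N, forall n, (N <= n)%nat -> Rabs (e n y) < eps / 2).
  { intros y Hy. destruct (proj1 (is_lim_seq_Reals _ _) (Hlim y Hy) (eps / 2)) as [N HN]; [lra|].
    exists N. intros n Hn. rewrite <- (Rminus_0_r (e n y)). apply HN. lia. }
  (* sweep [[c,d]] from left to right with steps of length [del] *)
  assert (Hsweep : forall j, exists N, forall n x, (N <= n)%nat -> c <= x <= d ->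
            x <= c + INR j * del -> Rabs (e n x) <= eps).
  { induction j as [|j [N1 HN1]].
    - destruct (Hpt c) as [N HN]; [lra|]. exists N. intros n x Hn Hx Hxj.
      rewrite Rmult_0_l, Rplus_0_r in Hxj. replace x with c by lra. specialize (HN n Hn). lra.
    - set (g := Rmin (c + INR (S j) * del) d).
      assert (Hg : c <= g <= d).
      { unfold g. split; [apply Rmin_glb; [pose proof (pos_INR (S j)); nra | lra] | apply Rmin_r]. }
      destruct (Hpt g Hg) as [N2 HN2]. exists (Nat.max N1 N2). intros n x Hn Hx Hxj.
      destruct (Rle_or_lt x (c + INR j * del)) as [Hle | Hgt]; [apply HN1; auto; lia|].
      assert (Hxg : x <= g) by (unfold g; apply Rmin_glb; lra).
      assert (Hgx : g <= c + INR (S j) * del) by apply Rmin_l.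
      rewrite S_INR in Hgx.
      assert (Hdist : K * Rabs (x - g) <= eps / 2).
      { rewrite Rabs_left1 by lra. apply Rle_trans with (K * del); [apply Rmult_le_compat_l|]; lra. }
      pose proof (Hlip n x g Hx Hg) as Hxg'. pose proof (Rabs_triang_inv (e n x) (e n g)).
      specialize (HN2 n ltac:(lia)). lra. }
  destruct (INR_unbounded ((d - c) / del)) as [m Hm].
  destruct (Hsweep m) as [N HN]. exists N. intros n x Hn Hx. rewrite Rminus_0_r. apply HN; auto.
  apply Rmult_gt_compat_r with (r := del) in Hm; [|lra].
  unfold Rdiv in Hm. rewrite Rmult_assoc, Rinv_l, Rmult_1_r in Hm; lra.
Qed.

Lemma uniform_cvg_of_equi_lipschitz (fn : nat -> R -> R) (f : R -> R) c d C :
  (forall n x y, c <= x <= d -> c <= y <= d -> Rabs (fn n x - fn n y) <= C * Rabs (x - y)) ->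
  (forall x, c <= x <= d -> is_lim_seq (fun n => fn n x) (f x)) ->
  uniform_cvg_on c d fn f.
Proof.
  intros Hlip Hlim.
  pose proof (lipschitz_of_pointwise_limit fn f c d C Hlip Hlim) as Hflip.
  intros eps Heps.
  destruct (uniform_cvg_0_of_equi_lipschitz (fun n x => fn n x - f x) c d (2 * Rabs C))
    with eps as [N HN]; auto.
  - pose proof (Rabs_pos C). lra.
  - intros n x y Hx Hy.
    replace (fn n x - f x - (fn n y - f y)) with ((fn n x - fn n y) - (f x - f y)) by ring.
    eapply Rle_trans; [apply Rabs_triang|]. rewrite Rabs_Ropp.
    pose proof (Hlip n x y Hx Hy). pose proof (Hflip x y Hx Hy).
    pose proof (Rmult_le_compat_r _ _ _ (Rabs_pos (x - y)) (Rle_abs C)). lra.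
  - intros x Hx. replace 0 with (f x - f x) by ring.
    apply is_lim_seq_minus'; [now apply Hlim | apply is_lim_seq_const].
  - exists N. intros n x Hn Hx. specialize (HN n x Hn Hx). now rewrite Rminus_0_r in HN.
Qed.

(** * The Dirichlet problem for [-u'' + k^2 u = f] on [(0, L)] *)

Section Dirichlet.

Variables (k L : R).
Hypotheses (Hk : 0 < k) (HL : 0 < L).

Definition int_left (f : R -> R) (x : R) : R := RInt (fun y => sinh (k*y) * f y) 0 x.
Definition int_right (f : R -> R) (x : R) : R := RInt (fun y => sinh (k*(L-y)) * f y) x L.

(* Green's formula, with boundary values [u(0) = u(L) = al]. *)
Definition dirichlet (al : R) (f : R -> R) (x : R) : R :=
  al * (sinh (k*(L-x)) + sinh (k*x)) / sinh (k*L)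
  + (sinh (k*(L-x)) * int_left f x + sinh (k*x) * int_right f x) / (k * sinh (k*L)).

Definition dirichlet_deriv (al : R) (f : R -> R) (x : R) : R :=
  al * k * (cosh (k*x) - cosh (k*(L-x))) / sinh (k*L)
  + (cosh (k*x) * int_right f x - cosh (k*(L-x)) * int_left f x) / sinh (k*L).

Lemma sinh_kL_pos : 0 < sinh (k*L).
Proof. apply sinh_pos; nra. Qed.

Lemma continuous_sinh_scal_mul (f : R -> R) x : continuous f x ->
  continuous (fun y => sinh (k*y) * f y) x.
Proof.
  intros Hf. apply (continuous_mult (K := R_AbsRing)); auto.
  apply (ex_derive_continuous (V := R_NormedModule)). eexists. apply is_derive_sinh_scal.
Qed.

Lemma continuous_sinh_refl_mul (f : R -> R) x : continuous f x ->
  continuous (fun y => sinh (k*(L-y)) * f y) x.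
Proof.
  intros Hf. apply (continuous_mult (K := R_AbsRing)); auto.
  apply (ex_derive_continuous (V := R_NormedModule)). eexists. apply is_derive_sinh_refl.
Qed.

Lemma is_derive_int_left f x : (forall y, continuous f y) ->
  is_derive (int_left f) x (sinh (k*x) * f x).
Proof.
  intros Hf. apply (is_derive_RInt (fun y => sinh (k*y) * f y) (int_left f) 0 x).
  - apply filter_forall; intros y. apply (RInt_correct (V := R_CompleteNormedModule)).
    apply ex_RInt_continuous_R; intros z. apply continuous_sinh_scal_mul, Hf.
  - apply continuous_sinh_scal_mul, Hf.
Qed.

Lemma is_derive_int_right f x : (forall y, continuous f y) ->
  is_derive (int_right f) x (- (sinh (k*(L-x)) * f x)).
Proof.
  intros Hf. apply (is_derive_RInt' (fun y => sinh (k*(L-y)) * f y) (int_right f) x L).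
  - apply filter_forall; intros y. apply (RInt_correct (V := R_CompleteNormedModule)).
    apply ex_RInt_continuous_R; intros z. apply continuous_sinh_refl_mul, Hf.
  - apply continuous_sinh_refl_mul, Hf.
Qed.

Lemma is_derive_dirichlet al (f : R -> R) x : (forall y, continuous f y) ->
  is_derive (dirichlet al f) x (dirichlet_deriv al f x).
Proof.
  intros Hf. set (S := sinh (k*L)).
  assert (HS : 0 < S) by apply sinh_kL_pos.
  apply (is_derive_ext_R (fun t => al / S * (sinh (k*(L-t)) + sinh (k*t))
    + / (k*S) * (sinh (k*(L-t)) * int_left f t + sinh (k*t) * int_right f t))).
  { intros t. unfold dirichlet. fold S. field; repeat split; lra. }
  replace (dirichlet_deriv al f x) with
    (al / S * (- k * cosh (k*(L-x)) + k * cosh (k*x))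
     + / (k*S) * ((- k * cosh (k*(L-x)) * int_left f x + sinh (k*(L-x)) * (sinh (k*x) * f x))
        + (k * cosh (k*x) * int_right f x + sinh (k*x) * (- (sinh (k*(L-x)) * f x)))))
    by (unfold dirichlet_deriv; fold S; field; repeat split; lra).
  apply is_derive_Rplus; apply is_derive_scal, is_derive_Rplus.
  - apply is_derive_sinh_refl.
  - apply is_derive_sinh_scal.
  - apply (is_derive_Rmult (fun t => sinh (k*(L-t))) (int_left f)).
    + apply is_derive_sinh_refl.
    + now apply is_derive_int_left.
  - apply (is_derive_Rmult (fun t => sinh (k*t)) (int_right f)).
    + apply is_derive_sinh_scal.
    + now apply is_derive_int_right.
Qed.

Lemma is_derive_dirichlet_deriv al (f : R -> R) x : (forall y, continuous f y) ->
  is_derive (dirichlet_deriv al f) x (k*k * dirichlet al f x - f x).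
Proof.
  intros Hf. set (S := sinh (k*L)).
  assert (HS : 0 < S) by apply sinh_kL_pos.
  apply (is_derive_ext_R (fun t => al * k / S * (cosh (k*t) - cosh (k*(L-t)))
    + / S * (cosh (k*t) * int_right f t - cosh (k*(L-t)) * int_left f t))).
  { intros t. unfold dirichlet_deriv. fold S. field. lra. }
  (* the [f x] terms combine through [sinh (k x + k (L-x)) = sinh (k L)] *)
  assert (Hadd : cosh (k*x) * sinh (k*(L-x)) + sinh (k*x) * cosh (k*(L-x)) = S).
  { unfold S. replace (k*L) with (k*x + k*(L-x)) by ring. rewrite sinh_plus. ring. }
  replace (k*k * dirichlet al f x - f x) with
    (al * k / S * (k * sinh (k*x) - - k * sinh (k*(L-x)))
     + / S * ((k * sinh (k*x) * int_right f x + cosh (k*x) * (- (sinh (k*(L-x)) * f x)))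
        - (- k * sinh (k*(L-x)) * int_left f x + cosh (k*(L-x)) * (sinh (k*x) * f x)))).
  2: { assert (Hfx : f x = f x * (cosh (k*x) * sinh (k*(L-x)) + sinh (k*x) * cosh (k*(L-x))) / S)
         by (rewrite Hadd; field; lra).
       unfold dirichlet. fold S. rewrite Hfx at 3. field; repeat split; lra. }
  apply is_derive_Rplus; apply is_derive_scal, is_derive_Rminus.
  - apply is_derive_cosh_scal.
  - apply is_derive_cosh_refl.
  - apply (is_derive_Rmult (fun t => cosh (k*t)) (int_right f)).
    + apply is_derive_cosh_scal.
    + now apply is_derive_int_right.
  - apply (is_derive_Rmult (fun t => cosh (k*(L-t))) (int_left f)).
    + apply is_derive_cosh_refl.
    + now apply is_derive_int_left.
Qed.

Lemma dirichlet_0 al f : dirichlet al f 0 = al.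
Proof.
  pose proof sinh_kL_pos. unfold dirichlet, int_left.
  rewrite RInt_point_R, Rmult_0_r, sinh_0, Rminus_0_r. field; repeat split; lra.
Qed.

Lemma dirichlet_L al f : dirichlet al f L = al.
Proof.
  pose proof sinh_kL_pos. unfold dirichlet, int_right.
  rewrite RInt_point_R, Rminus_diag, Rmult_0_r, sinh_0. field; repeat split; lra.
Qed.

Lemma sinh_scal_bound y : 0 <= y <= L -> 0 <= sinh (k*y) <= exp (k*L).
Proof. intros Hy. apply sinh_cosh_le_exp. nra. Qed.

Lemma sinh_refl_bound y : 0 <= y <= L -> 0 <= sinh (k*(L-y)) <= exp (k*L).
Proof. intros Hy. apply sinh_cosh_le_exp. nra. Qed.

Lemma cosh_scal_bound y : 0 <= y <= L -> 0 <= cosh (k*y) <= exp (k*L).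
Proof. intros Hy. apply sinh_cosh_le_exp. nra. Qed.

Lemma cosh_refl_bound y : 0 <= y <= L -> 0 <= cosh (k*(L-y)) <= exp (k*L).
Proof. intros Hy. apply sinh_cosh_le_exp. nra. Qed.

Lemma int_left_bound f B x : 0 <= x <= L -> (forall y, continuous f y) ->
  (forall y, 0 <= y <= L -> Rabs (f y) <= B) -> Rabs (int_left f x) <= L * (exp (k*L) * B).
Proof.
  intros Hx Hf HB. assert (0 <= B) by (specialize (HB 0); pose proof (Rabs_pos (f 0)); lra).
  unfold int_left. eapply Rle_trans.
  - apply abs_RInt_le_const with (M := exp (k*L) * B); [lra | |].
    + apply ex_RInt_continuous_R. intros; now apply continuous_sinh_scal_mul.
    + intros t Ht. apply Rabs_mult_le; [|apply HB; lra].
      destruct (sinh_scal_bound t) as [H0 H1]; [lra|]. rewrite Rabs_pos_eq; lra.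
  - pose proof (exp_pos (k*L)). apply Rmult_le_compat_r; nra.
Qed.

Lemma int_right_bound f B x : 0 <= x <= L -> (forall y, continuous f y) ->
  (forall y, 0 <= y <= L -> Rabs (f y) <= B) -> Rabs (int_right f x) <= L * (exp (k*L) * B).
Proof.
  intros Hx Hf HB. assert (0 <= B) by (specialize (HB 0); pose proof (Rabs_pos (f 0)); lra).
  unfold int_right. eapply Rle_trans.
  - apply abs_RInt_le_const with (M := exp (k*L) * B); [lra | |].
    + apply ex_RInt_continuous_R. intros; now apply continuous_sinh_refl_mul.
    + intros t Ht. apply Rabs_mult_le; [|apply HB; lra].
      destruct (sinh_refl_bound t) as [H0 H1]; [lra|]. rewrite Rabs_pos_eq; lra.
  - pose proof (exp_pos (k*L)). apply Rmult_le_compat_r; nra.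
Qed.

Lemma dirichlet_lipschitz al B : exists C, forall f, (forall y, continuous f y) ->
  (forall y, 0 <= y <= L -> Rabs (f y) <= B) ->
  forall x y, 0 <= x <= L -> 0 <= y <= L ->
  Rabs (dirichlet al f x - dirichlet al f y) <= C * Rabs (x - y).
Proof.
  set (S := sinh (k*L)). assert (HS : 0 < S) by apply sinh_kL_pos.
  exists ((Rabs (al * k) * (2 * exp (k*L)) + 2 * (exp (k*L) * (L * (exp (k*L) * B)))) / S).
  intros f Hf HB x y Hx Hy.
  destruct (MVT_gen (dirichlet al f) y x (dirichlet_deriv al f)) as [z [Hz ->]].
  - intros; now apply is_derive_dirichlet.
  - intros; apply continuity_pt_filterlim, (ex_derive_continuous (V := R_NormedModule)).
    eexists. now apply is_derive_dirichlet.
  - rewrite Rabs_mult. apply Rmult_le_compat_r; [apply Rabs_pos|].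
    assert (Hz' : 0 <= z <= L).
    { split; [apply Rle_trans with (Rmin y x) | apply Rle_trans with (Rmax y x)];
        try apply Hz; [apply Rmin_glb | apply Rmax_lub]; lra. }
    pose proof (int_left_bound f B z Hz' Hf HB). pose proof (int_right_bound f B z Hz' Hf HB).
    pose proof (cosh_scal_bound z Hz'). pose proof (cosh_refl_bound z Hz').
    unfold dirichlet_deriv. fold S.
    replace (al * k * (cosh (k*z) - cosh (k*(L-z))) / S
      + (cosh (k*z) * int_right f z - cosh (k*(L-z)) * int_left f z) / S)
      with ((al * k * (cosh (k*z) - cosh (k*(L-z)))
        + (cosh (k*z) * int_right f z - cosh (k*(L-z)) * int_left f z)) * / S) by (field; lra).
    rewrite Rabs_mult, (Rabs_pos_eq (/ S)) by (apply Rlt_le, Rinv_0_lt_compat; lra).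
    apply Rmult_le_compat_r; [apply Rlt_le, Rinv_0_lt_compat; lra|].
    eapply Rle_trans; [apply Rabs_triang | apply Rplus_le_compat].
    + apply Rabs_mult_le; [lra|]. apply Rabs_le. lra.
    + eapply Rle_trans; [apply Rabs_triang|]. rewrite Rabs_Ropp.
      replace (2 * (exp (k*L) * (L * (exp (k*L) * B))))
        with (exp (k*L) * (L * (exp (k*L) * B)) + exp (k*L) * (L * (exp (k*L) * B))) by ring.
      apply Rplus_le_compat; apply Rabs_mult_le; auto; apply Rabs_le; lra.
Qed.

Lemma dirichlet_minus al f g x : (forall y, continuous f y) -> (forall y, continuous g y) ->
  dirichlet al f x - dirichlet al g x
  = (sinh (k*(L-x)) * int_left (fun y => f y - g y) x
     + sinh (k*x) * int_right (fun y => f y - g y) x) / (k * sinh (k*L)).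
Proof.
  intros Hf Hg. pose proof sinh_kL_pos.
  assert (Hl : int_left (fun y => f y - g y) x = int_left f x - int_left g x).
  { unfold int_left. rewrite <- (RInt_minus (V := R_CompleteNormedModule));
      try (apply ex_RInt_continuous_R; intros; now apply continuous_sinh_scal_mul).
    apply RInt_ext. intros; cbn; ring. }
  assert (Hr : int_right (fun y => f y - g y) x = int_right f x - int_right g x).
  { unfold int_right. rewrite <- (RInt_minus (V := R_CompleteNormedModule));
      try (apply ex_RInt_continuous_R; intros; now apply continuous_sinh_refl_mul).
    apply RInt_ext. intros; cbn; ring. }
  rewrite Hl, Hr. unfold dirichlet. field. split; lra.
Qed.

Lemma dirichlet_stability : exists K, 0 <= K /\ forall al f g eps x,
  (forall y, continuous f y) -> (forall y, continuous g y) ->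
  (forall y, 0 <= y <= L -> Rabs (f y - g y) <= eps) -> 0 <= x <= L ->
  Rabs (dirichlet al f x - dirichlet al g x) <= K * eps.
Proof.
  pose proof sinh_kL_pos. pose proof (exp_pos (k*L)).
  exists (2 * (exp (k*L) * (L * exp (k*L))) / (k * sinh (k*L))). split.
  { apply Rle_mult_inv_pos; [|nra]. repeat apply Rmult_le_pos; lra. }
  intros al f g eps x Hf Hg Hfg Hx.
  assert (Hcont : forall y, continuous (fun z => f z - g z) y).
  { intros y. apply (continuous_minus (V := R_NormedModule)); auto. }
  assert (Hnum : Rabs (sinh (k*(L-x)) * int_left (fun y => f y - g y) x
                       + sinh (k*x) * int_right (fun y => f y - g y) x)
                 <= 2 * (exp (k*L) * (L * (exp (k*L) * eps)))).
  { eapply Rle_trans; [apply Rabs_triang|].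
    replace (2 * (exp (k*L) * (L * (exp (k*L) * eps))))
      with (exp (k*L) * (L * (exp (k*L) * eps)) + exp (k*L) * (L * (exp (k*L) * eps))) by ring.
    apply Rplus_le_compat; apply Rabs_mult_le;
      try (now apply int_left_bound); try (now apply int_right_bound);
      rewrite Rabs_pos_eq; try apply sinh_refl_bound; try apply sinh_scal_bound; auto. }
  rewrite dirichlet_minus by auto. unfold Rdiv.
  rewrite Rabs_mult, (Rabs_pos_eq (/ _)) by (apply Rlt_le, Rinv_0_lt_compat; nra).
  apply Rle_trans with (2 * (exp (k*L) * (L * (exp (k*L) * eps))) * / (k * sinh (k*L))).
  - apply Rmult_le_compat_r; [apply Rlt_le, Rinv_0_lt_compat; nra | exact Hnum].
  - right. field. nra.
Qed.

Lemma dirichlet_uniform_limit al fn f x : 0 <= x <= L ->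
  (forall n y, continuous (fn n) y) -> (forall y, continuous f y) ->
  uniform_cvg_on 0 L fn f ->
  is_lim_seq (fun n => dirichlet al (fn n) x) (dirichlet al f x).
Proof.
  intros Hx Hfn Hf Hcvg. destruct dirichlet_stability as [K [HK Hstab]].
  apply is_lim_seq_Reals. intros eps Heps.
  destruct (Hcvg (eps / (K + 1))) as [N HN]; [apply Rdiv_lt_0_compat; lra|].
  exists N. intros n Hn. unfold R_dist.
  apply Rle_lt_trans with (K * (eps / (K + 1))).
  - apply Hstab; auto.
  - apply Rmult_lt_reg_r with (K + 1); [lra|].
    replace (K * (eps / (K + 1)) * (K + 1)) with (K * eps) by (field; lra). nra.
Qed.

End Dirichlet.

(** * Comparison principle *)

Lemma second_derivative_nonneg_at_min (w dw : R -> R) (c d x0 d2 : R) :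
  c < x0 < d -> (forall t, c < t < d -> is_derive w t (dw t)) -> is_derive dw x0 d2 ->
  (forall t, c < t < d -> w x0 <= w t) -> 0 <= d2.
Proof.
  intros Hx0 Hw Hdw Hmin.
  assert (Hdw0 : dw x0 = 0).
  { set (pr := exist _ (dw x0) (proj1 (is_derive_Reals _ _ _) (Hw x0 Hx0)) : derivable_pt w x0).
    exact (deriv_minimum w c d x0 pr (proj1 Hx0) (proj2 Hx0) (fun t H1 H2 => Hmin t (conj H1 H2))). }
  apply Rnot_lt_le. intros Hd2.
  destruct (proj1 (is_derive_Reals _ _ _) Hdw (- d2 / 2)) as [del Hdel]; [lra|].
  set (h := Rmin (del / 2) ((d - x0) / 2)).
  assert (Hh : 0 < h < del /\ x0 + h < d).
  { pose proof (cond_pos del). pose proof (Rmin_l (del / 2) ((d - x0) / 2)).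
    pose proof (Rmin_r (del / 2) ((d - x0) / 2)).
    assert (0 < h) by (apply Rmin_pos; lra). fold h in H0, H1. lra. }
  (* [dw x0 = 0] and [dw' x0 < 0], so [w] decreases just right of [x0] *)
  assert (Hneg : forall t, x0 < t <= x0 + h -> dw t < 0).
  { intros t Ht. specialize (Hdel (t - x0)).
    replace (x0 + (t - x0)) with t in Hdel by ring. rewrite Hdw0, Rminus_0_r in Hdel.
    assert (Habs : (dw t / (t - x0) - d2) < - d2 / 2).
    { eapply Rle_lt_trans; [apply Rle_abs | apply Hdel; [lra|]].
      rewrite Rabs_pos_eq; lra. }
    assert (Hq : dw t / (t - x0) < 0) by lra.
    apply Rnot_le_lt. intros Hge. apply (Rlt_not_le _ _ Hq).
    apply Rle_mult_inv_pos; lra. }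
  destruct (MVT_cor2 w dw x0 (x0 + h)) as [xi [Hmvt Hxi]]; [lra | |].
  { intros t Ht. apply is_derive_Reals, Hw. lra. }
  specialize (Hmin (x0 + h) ltac:(lra)). specialize (Hneg xi ltac:(lra)). nra.
Qed.

Lemma comparison_principle (M c d : R) (u v : R -> R) : 0 < M -> c <= d ->
  (forall x, c <= x <= d -> continuous_on_Icc c d u x /\ continuous_on_Icc c d v x) ->
  (forall x, c < x < d -> ex_derive u x /\ ex_derive (Derive u) x /\
     ex_derive v x /\ ex_derive (Derive v) x /\
     M * v x - Derive (Derive v) x <= M * u x - Derive (Derive u) x) ->
  v c <= u c -> v d <= u d -> forall x, c <= x <= d -> v x <= u x.
Proof.
  intros HM Hcd Hcont Hder Hc Hd.
  set (w := fun t => u t - v t).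
  destruct (continuity_ab_min (fun t => w (clamp c d t)) c d) as [x0 [Hmin Hx0]]; [lra| |].
  { intros t _. apply continuity_pt_filterlim.
    apply (continuous_minus (V := R_NormedModule)
             (fun y => u (clamp c d y)) (fun y => v (clamp c d y)));
      apply continuous_clamp; auto; apply Hcont. }
  assert (Hmin' : forall t, c <= t <= d -> w x0 <= w t).
  { intros t Ht. specialize (Hmin t Ht). now rewrite !clamp_id in Hmin. }
  intros x Hx. apply Rnot_lt_le. intros Hlt.
  assert (Hw0 : w x0 < 0) by (specialize (Hmin' x Hx); unfold w in *; lra).
  assert (Hx0' : c < x0 < d).
  { split; apply Rnot_le_lt; intros Hle.
    - replace x0 with c in Hw0 by lra. unfold w in Hw0. lra.
    - replace x0 with d in Hw0 by lra. unfold w in Hw0. lra. }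
  destruct (Hder x0 Hx0') as [Du [DDu [Dv [DDv Hineq]]]].
  assert (Hconvex : 0 <= Derive (Derive u) x0 - Derive (Derive v) x0).
  { apply (second_derivative_nonneg_at_min w (fun t => Derive u t - Derive v t) c d x0); auto.
    - intros t Ht. destruct (Hder t Ht) as [Du' [_ [Dv' _]]].
      apply is_derive_Rminus; now apply Derive_correct.
    - apply is_derive_Rminus; now apply Derive_correct.
    - intros t Ht. apply Hmin'. lra. }
  unfold w in Hw0. nra.
Qed.

Definition solves (M : R) (u f : R -> R) : Prop :=
  forall x, is_derive u x (Derive u x) /\ is_derive (Derive u) x (M * u x - f x).

Lemma solves_intro M (u du f : R -> R) : (forall x, is_derive u x (du x)) ->
  (forall x, is_derive du x (M * u x - f x)) -> solves M u f.
Proof.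
  intros Hu Hdu x. assert (HD : forall t, Derive u t = du t) by (intros; now apply is_derive_unique).
  split; [rewrite HD; auto|]. apply (is_derive_ext_R du); [intros; now rewrite HD | auto].
Qed.

Lemma continuous_solves M u f x : solves M u f -> continuous u x.
Proof.
  intros Hu. apply (ex_derive_continuous (V := R_NormedModule)).
  exists (Derive u x). exact (proj1 (Hu x)).
Qed.

Lemma solves_dirichlet k L al f : 0 < k -> 0 < L -> (forall x, continuous f x) ->
  solves (k*k) (dirichlet k L al f) f.
Proof.
  intros Hk HL Hf. apply solves_intro with (dirichlet_deriv k L al f); intros x.
  - now apply is_derive_dirichlet.
  - now apply is_derive_dirichlet_deriv.
Qed.

Lemma solves_const M r : solves M (fun _ => r) (fun _ => M * r).
Proof.
  apply solves_intro with (fun _ => 0); intros x.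
  - apply (is_derive_const (K := R_AbsRing) (V := R_NormedModule)).
  - replace (M * r - M * r) with 0 by ring.
    apply (is_derive_const (K := R_AbsRing) (V := R_NormedModule)).
Qed.

Lemma solves_lincomb M u f w g s : solves M u f -> solves M w g ->
  solves M (fun x => u x + s * w x) (fun x => f x + s * g x).
Proof.
  intros Hu Hw. apply solves_intro with (fun x => Derive u x + s * Derive w x); intros x.
  - apply is_derive_Rplus; [apply Hu | apply is_derive_scal, Hw].
  - replace (M * (u x + s * w x) - (f x + s * g x))
      with ((M * u x - f x) + s * (M * w x - g x)) by ring.
    apply is_derive_Rplus; [apply Hu | apply is_derive_scal, Hw].
Qed.

Lemma solves_sinh_refl k d : solves (k*k) (fun x => sinh (k*(d-x))) (fun _ => 0).
Proof.
  apply solves_intro with (fun x => - k * cosh (k*(d-x))); intros x.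
  - apply is_derive_sinh_refl.
  - replace (k*k * sinh (k*(d-x)) - 0) with (- k * (- k * sinh (k*(d-x)))) by ring.
    apply is_derive_scal, is_derive_cosh_refl.
Qed.

Lemma solves_le M c d u f v g : 0 < M -> c <= d -> solves M u f -> solves M v g ->
  (forall x, c < x < d -> g x <= f x) -> v c <= u c -> v d <= u d ->
  forall x, c <= x <= d -> v x <= u x.
Proof.
  intros HM Hcd Hu Hv Hfg. apply (comparison_principle M c d u v HM Hcd).
  - intros x _. split; apply continuous_on_Icc_of_continuous; eapply continuous_solves; eauto.
  - intros x Hx. destruct (Hu x) as [Hu1 Hu2]. destruct (Hv x) as [Hv1 Hv2].
    repeat split; try (eexists; eauto).
    rewrite (is_derive_unique _ _ _ Hu2), (is_derive_unique _ _ _ Hv2).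
    specialize (Hfg x Hx). lra.
Qed.

Lemma solves_between M c d u f A B : 0 < M -> c <= d -> solves M u f ->
  (forall x, c < x < d -> M * A <= f x <= M * B) ->
  A <= u c <= B -> A <= u d <= B -> forall x, c <= x <= d -> A <= u x <= B.
Proof.
  intros HM Hcd Hu Hf Hc Hd x Hx. split.
  - apply (solves_le M c d u f (fun _ => A) (fun _ => M * A)); auto;
      [apply solves_const | intros; apply Hf | |]; auto; lra.
  - apply (solves_le M c d (fun _ => B) (fun _ => M * B) u f); auto;
      [apply solves_const | intros; apply Hf | |]; auto; lra.
Qed.

(* Strictness at the left end propagates inside, through the positive solution [sinh (k (d - x))]
   of the homogeneous equation. *)
Lemma solves_lt k c d u f v g : 0 < k -> c < d -> solves (k*k) u f -> solves (k*k) v g ->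
  (forall x, c < x < d -> g x <= f x) -> v c < u c -> v d <= u d ->
  forall x, c <= x < d -> v x < u x.
Proof.
  intros Hk Hcd Hu Hv Hfg Hc Hd x Hx.
  assert (Hs : forall y, y < d -> 0 < sinh (k*(d-y))) by (intros; apply sinh_pos; nra).
  set (ep := (u c - v c) / sinh (k*(d-c))).
  assert (Hep : 0 < ep) by (apply Rdiv_lt_0_compat; [lra | apply Hs; lra]).
  assert (Hle : v x + ep * sinh (k*(d-x)) <= u x).
  { apply (solves_le (k*k) c d u f (fun y => v y + ep * sinh (k*(d-y))) (fun y => g y + ep * 0));
      try lra.
    - nra.
    - exact Hu.
    - apply solves_lincomb; [exact Hv | apply solves_sinh_refl].
    - intros y Hy. specialize (Hfg y Hy). lra.
    - unfold ep. field_simplify; [lra | apply Rgt_not_eq, Hs; lra].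
    - rewrite Rminus_diag, Rmult_0_r, sinh_0. lra. }
  pose proof (Hs x (proj2 Hx)). nra.
Qed.

Definition reaction (M a p q : R) : R := p * (1 - p - a * q) + M * p.

Lemma reaction_monotone M a p q p' q' : 0 <= a -> 1 + a <= M ->
  0 <= p <= p' -> p' <= 1 -> 0 <= q' <= q -> q <= 1 -> reaction M a p q <= reaction M a p' q'.
Proof.
  intros. unfold reaction.
  assert (0 <= (p' - p) * (1 + M - p - p' - a * q')) by (apply Rmult_le_pos; nra).
  assert (0 <= a * p * (q - q')) by (apply Rmult_le_pos; nra).
  nra.
Qed.

Lemma reaction_bounds M a p q : 0 <= a -> 1 + a <= M ->
  0 <= p <= 1 -> 0 <= q <= 1 -> 0 <= reaction M a p q <= M.
Proof.
  intros. split.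
  - replace 0 with (reaction M a 0 q) by (unfold reaction; ring). apply reaction_monotone; lra.
  - replace M with (reaction M a 1 0) at 2 by (unfold reaction; ring). apply reaction_monotone; lra.
Qed.

Lemma reaction_lipschitz M a p q p' q' : 0 <= a -> 0 <= M ->
  0 <= p <= 1 -> 0 <= q <= 1 -> 0 <= p' <= 1 -> 0 <= q' <= 1 ->
  Rabs (reaction M a p q - reaction M a p' q') <= (1 + M + a) * (Rabs (p - p') + Rabs (q - q')).
Proof.
  intros. unfold reaction.
  replace (p * (1 - p - a * q) + M * p - (p' * (1 - p' - a * q') + M * p'))
    with ((p - p') * (1 + M - p - p' - a * q) + (- a * p') * (q - q')) by ring.
  eapply Rle_trans; [apply Rabs_triang|].
  rewrite (Rabs_mult (p - p')), (Rabs_mult (- a * p') (q - q')).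
  assert (Rabs (1 + M - p - p' - a * q) <= 1 + M + a) by (apply Rabs_le; split; nra).
  assert (Rabs (- a * p') <= 1 + M + a) by (apply Rabs_le; split; nra).
  pose proof (Rmult_le_compat_l _ _ _ (Rabs_pos (p - p')) H5).
  pose proof (Rmult_le_compat_r _ _ _ (Rabs_pos (q - q')) H6). nra.
Qed.

Lemma continuous_reaction M a (p q : R -> R) x : continuous p x -> continuous q x ->
  continuous (fun y => reaction M a (p y) (q y)) x.
Proof.
  intros Hp Hq. unfold reaction.
  assert (Hc : forall r : R, continuous (fun _ => r) x)
    by (intros; apply (continuous_const (U := R_UniformSpace) (V := R_UniformSpace))).
  apply (continuous_plus (V := R_NormedModule)); apply (continuous_mult (K := R_AbsRing)); auto.
  apply (continuous_minus (V := R_NormedModule)); [apply (continuous_minus (V := R_NormedModule)) |];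
    auto; apply (continuous_mult (K := R_AbsRing)); auto.
Qed.

Lemma uniform_cvg_reaction M a c d (pn qn : nat -> R -> R) (p q : R -> R) : 0 <= a -> 0 <= M ->
  (forall n x, c <= x <= d -> 0 <= pn n x <= 1 /\ 0 <= qn n x <= 1) ->
  (forall x, c <= x <= d -> 0 <= p x <= 1 /\ 0 <= q x <= 1) ->
  uniform_cvg_on c d pn p -> uniform_cvg_on c d qn q ->
  uniform_cvg_on c d (fun n x => reaction M a (pn n x) (qn n x)) (fun x => reaction M a (p x) (q x)).
Proof.
  intros Ha HM Hn Hl Hp Hq eps Heps.
  set (K := 1 + M + a). assert (HK : 0 < K) by (unfold K; lra).
  destruct (Hp (eps / (2 * K))) as [N1 HN1]; [apply Rdiv_lt_0_compat; lra|].
  destruct (Hq (eps / (2 * K))) as [N2 HN2]; [apply Rdiv_lt_0_compat; lra|].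
  exists (Nat.max N1 N2). intros n x Hnx Hx.
  specialize (HN1 n x ltac:(lia) Hx). specialize (HN2 n x ltac:(lia) Hx).
  destruct (Hn n x Hx). destruct (Hl x Hx).
  eapply Rle_trans; [apply reaction_lipschitz; auto|]. fold K.
  apply Rle_trans with (K * (eps / (2 * K) + eps / (2 * K))); [apply Rmult_le_compat_l; lra|].
  right. field. lra.
Qed.

(** * Monotone iteration *)

Definition is_subbarrier (a b L : R) (phi psi : R -> R) : Prop :=
  (forall x, 0 <= x <= L -> cont_on_closed L phi x /\ cont_on_closed L psi x) /\
  (forall x, 0 < x < L ->
     ex_derive phi x /\ ex_derive (Derive phi) x /\
     ex_derive psi x /\ ex_derive (Derive psi) x /\
     - Derive (Derive phi) x <= phi x * (1 - phi x - a * psi x) /\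
     psi x * (1 - b * phi x - psi x) <= - Derive (Derive psi) x /\
     0 < phi x < 1 /\ 0 < psi x < 1) /\
  phi 0 = 0 /\ phi L = 0 /\ psi 0 = 1 /\ psi L = 1.

Lemma barrier_is_subbarrier a b a' b' L phi psi : a <= a' -> b' <= b ->
  is_barrier a' b' L phi psi -> is_subbarrier a b L phi psi.
Proof.
  intros Ha Hb [Hc [Hi Hbd]]. split; [exact Hc | split; [|exact Hbd]].
  intros x Hx. destruct (Hi x Hx) as [D1 [D2 [D3 [D4 [E1 [E2 [B1 B2]]]]]]].
  repeat split; try easy; try lra.
  - rewrite E1. apply Rmult_le_compat_l; nra.
  - rewrite E2. apply Rmult_le_compat_l; nra.
Qed.

Section Iteration.

Variables (a b L L' : R) (phib psib : R -> R).
Hypotheses (Ha : 0 < a) (Hb : 0 < b) (HL' : 0 < L') (HL'L : L' <= L)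
  (Hsub : is_subbarrier a b L' phib psib).

Let k := 2 + a + b.
(* any [M >= 1 + max a b] would do, see [reaction_monotone] *)
Let M := k * k.

Let HL : 0 < L. Proof. lra. Qed.
Let Hk : 0 < k. Proof. unfold k; lra. Qed.
Let HM : 1 + a <= M /\ 1 + b <= M. Proof. unfold M, k. split; nra. Qed.
Let HM_pos : 0 < M. Proof. unfold M. nra. Qed.

Fixpoint iterate (n : nat) : (R -> R) * (R -> R) :=
  match n with
  | O => (fun _ => 1, fun _ => 0)
  | S m => (dirichlet k L 0 (fun x => reaction M a (fst (iterate m) x) (snd (iterate m) x)),
            dirichlet k L 1 (fun x => reaction M b (snd (iterate m) x) (fst (iterate m) x)))
  end.

Definition phi_iter n := fst (iterate n).
Definition psi_iter n := snd (iterate n).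

Lemma solves_iterate n :
  ((forall x, continuous (phi_iter n) x) /\ (forall x, continuous (psi_iter n) x)) /\
  solves M (phi_iter (S n)) (fun x => reaction M a (phi_iter n x) (psi_iter n x)) /\
  solves M (psi_iter (S n)) (fun x => reaction M b (psi_iter n x) (phi_iter n x)).
Proof.
  assert (Hc : forall r x, continuous (fun _ : R => r) x)
    by (intros; apply (continuous_const (U := R_UniformSpace) (V := R_UniformSpace))).
  induction n as [|n [_ [Sp Sq]]].
  - split; [split; intros; apply Hc|].
    split; apply solves_dirichlet; auto; intros y; apply continuous_reaction; apply Hc.
  - assert (Hp : forall x, continuous (phi_iter (S n)) x) by (intros; eapply continuous_solves, Sp).
    assert (Hq : forall x, continuous (psi_iter (S n)) x) by (intros; eapply continuous_solves, Sq).
    split; [now split|].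
    split; apply solves_dirichlet; auto; intros y; now apply continuous_reaction.
Qed.

Lemma iterate_boundary n :
  phi_iter (S n) 0 = 0 /\ phi_iter (S n) L = 0 /\ psi_iter (S n) 0 = 1 /\ psi_iter (S n) L = 1.
Proof. unfold phi_iter, psi_iter. cbn. now rewrite !dirichlet_0, !dirichlet_L. Qed.

Lemma iterate_in_unit n x : 0 <= x <= L -> 0 <= phi_iter n x <= 1 /\ 0 <= psi_iter n x <= 1.
Proof.
  revert x. induction n as [|n IHn]; intros x Hx; [unfold phi_iter, psi_iter; cbn; lra|].
  destruct (solves_iterate n) as [_ [Sp Sq]]. destruct (iterate_boundary n) as [? [? [? ?]]].
  split; [apply (solves_between M 0 L _ _ 0 1 HM_pos ltac:(lra) Sp) |
          apply (solves_between M 0 L _ _ 0 1 HM_pos ltac:(lra) Sq)]; try lra;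
    intros y Hy; destruct (IHn y ltac:(lra)); rewrite Rmult_0_r, Rmult_1_r; apply reaction_bounds; lra.
Qed.

Lemma iterate_monotone n x : 0 <= x <= L ->
  phi_iter (S n) x <= phi_iter n x /\ psi_iter n x <= psi_iter (S n) x.
Proof.
  revert x. induction n as [|n IHn]; intros x Hx.
  - pose proof (iterate_in_unit 1 x Hx). unfold phi_iter, psi_iter in *. cbn in *. lra.
  - destruct (solves_iterate n) as [_ [Sp Sq]]. destruct (solves_iterate (S n)) as [_ [Sp' Sq']].
    destruct (iterate_boundary n) as [? [? [? ?]]]. destruct (iterate_boundary (S n)) as [? [? [? ?]]].
    split; [apply (solves_le M 0 L _ _ _ _ HM_pos ltac:(lra) Sp Sp') |
            apply (solves_le M 0 L _ _ _ _ HM_pos ltac:(lra) Sq' Sq)]; try lra;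
      intros y Hy; destruct (IHn y ltac:(lra));
      destruct (iterate_in_unit n y ltac:(lra)); destruct (iterate_in_unit (S n) y ltac:(lra));
      apply reaction_monotone; lra.
Qed.

Lemma subbarrier_in_unit x : 0 <= x <= L' -> 0 <= phib x <= 1 /\ 0 <= psib x <= 1.
Proof.
  destruct Hsub as [_ [Hi [H0 [H1 [H2 H3]]]]]. intros Hx.
  destruct (Req_dec x 0) as [->|Hx0]; [rewrite H0, H2; lra|].
  destruct (Req_dec x L') as [->|HxL]; [rewrite H1, H3; lra|].
  destruct (Hi x ltac:(lra)) as [_ [_ [_ [_ [_ [_ [? ?]]]]]]]. lra.
Qed.

Lemma iterate_above_subbarrier n x : 0 <= x <= L' -> phib x <= phi_iter n x /\ psi_iter n x <= psib x.
Proof.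
  destruct Hsub as [Hc [Hi [H0 [H1 [H2 H3]]]]].
  revert x. induction n as [|n IHn]; intros x Hx.
  { pose proof (subbarrier_in_unit x Hx). unfold phi_iter, psi_iter. cbn. lra. }
  destruct (solves_iterate n) as [_ [Sp Sq]].
  destruct (iterate_boundary n) as [Bp0 [_ [Bq0 _]]].
  destruct (iterate_in_unit (S n) L' ltac:(lra)) as [BpL BqL].
  split; apply (comparison_principle M 0 L'); auto; try lra.
  - intros y Hy. split; [apply continuous_on_Icc_of_continuous, (continuous_solves M _ _ y Sp)|].
    apply (Hc y Hy).
  - intros y Hy. destruct (Sp y) as [Dp DDp]. destruct (Hi y Hy) as [D1 [D2 [_ [_ [Hphi _]]]]].
    repeat split; [eexists; exact Dp | eexists; exact DDp | exact D1 | exact D2 |].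
    rewrite (is_derive_unique _ _ _ DDp).
    destruct (IHn y ltac:(lra)). destruct (iterate_in_unit n y ltac:(lra)).
    destruct (subbarrier_in_unit y ltac:(lra)).
    assert (reaction M a (phib y) (psib y) <= reaction M a (phi_iter n y) (psi_iter n y))
      by (apply reaction_monotone; lra).
    unfold reaction in *. lra.
  - intros y Hy. split; [apply (Hc y Hy)|].
    apply continuous_on_Icc_of_continuous, (continuous_solves M _ _ y Sq).
  - intros y Hy. destruct (Sq y) as [Dq DDq]. destruct (Hi y Hy) as [_ [_ [D3 [D4 [_ [Hpsi _]]]]]].
    repeat split; [exact D3 | exact D4 | eexists; exact Dq | eexists; exact DDq |].
    rewrite (is_derive_unique _ _ _ DDq).
    destruct (IHn y ltac:(lra)). destruct (iterate_in_unit n y ltac:(lra)).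
    destruct (subbarrier_in_unit y ltac:(lra)).
    assert (reaction M b (psi_iter n y) (phi_iter n y) <= reaction M b (psib y) (phib y))
      by (apply reaction_monotone; lra).
    unfold reaction in *. lra.
Qed.

Lemma iterate_lipschitz : exists C, 0 <= C /\ forall n x y, 0 <= x <= L -> 0 <= y <= L ->
  Rabs (phi_iter n x - phi_iter n y) <= C * Rabs (x - y) /\
  Rabs (psi_iter n x - psi_iter n y) <= C * Rabs (x - y).
Proof.
  destruct (dirichlet_lipschitz k L Hk HL 0 M) as [C0 HC0].
  destruct (dirichlet_lipschitz k L Hk HL 1 M) as [C1 HC1].
  set (C := Rmax 0 (Rmax C0 C1)).
  assert (Hmax : 0 <= C /\ C0 <= C /\ C1 <= C).
  { unfold C. pose proof (Rmax_l 0 (Rmax C0 C1)). pose proof (Rmax_r 0 (Rmax C0 C1)).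
    pose proof (Rmax_l C0 C1). pose proof (Rmax_r C0 C1). lra. }
  exists C. split; [apply Hmax|]. intros n x y Hx Hy. pose proof (Rabs_pos (x - y)).
  destruct n as [|n].
  - unfold phi_iter, psi_iter. cbn. rewrite !Rminus_diag, Rabs_R0. split; nra.
  - destruct (solves_iterate n) as [[Hp Hq] _].
    assert (Hreact : forall z, 0 <= z <= L ->
              Rabs (reaction M a (phi_iter n z) (psi_iter n z)) <= M /\
              Rabs (reaction M b (psi_iter n z) (phi_iter n z)) <= M).
    { intros z Hz. destruct (iterate_in_unit n z Hz).
      split; rewrite Rabs_pos_eq; apply reaction_bounds; lra. }
    split.
    + eapply Rle_trans.
      * apply (HC0 (fun z => reaction M a (phi_iter n z) (psi_iter n z))); auto;
          [intros; now apply continuous_reaction | intros; now apply Hreact].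
      * apply Rmult_le_compat_r; lra.
    + eapply Rle_trans.
      * apply (HC1 (fun z => reaction M b (psi_iter n z) (phi_iter n z))); auto;
          [intros; now apply continuous_reaction | intros; now apply Hreact].
      * apply Rmult_le_compat_r; lra.
Qed.

(* Clamping extends the limits continuously to all of [R]. *)
Definition phi_lim x := real (Lim_seq (fun n => phi_iter n (clamp 0 L x))).
Definition psi_lim x := real (Lim_seq (fun n => psi_iter n (clamp 0 L x))).

Lemma iterate_cvg x : 0 <= x <= L ->
  is_lim_seq (fun n => phi_iter n x) (phi_lim x) /\ is_lim_seq (fun n => psi_iter n x) (psi_lim x).
Proof.
  intros Hx. unfold phi_lim, psi_lim. rewrite clamp_id by auto.
  split; apply Lim_seq_correct'.
  - apply ex_finite_lim_seq_decr with 0; intros n;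
      [apply (iterate_monotone n x Hx) | apply (iterate_in_unit n x Hx)].
  - apply ex_finite_lim_seq_incr with 1; intros n;
      [apply (iterate_monotone n x Hx) | apply (iterate_in_unit n x Hx)].
Qed.

Lemma limits_in_unit x : 0 <= x <= L -> 0 <= phi_lim x <= 1 /\ 0 <= psi_lim x <= 1.
Proof.
  intros Hx. destruct (iterate_cvg x Hx) as [Hp Hq].
  repeat split; [apply (is_lim_seq_lb _ _ _ Hp) | apply (is_lim_seq_ub _ _ _ Hp)
                | apply (is_lim_seq_lb _ _ _ Hq) | apply (is_lim_seq_ub _ _ _ Hq)];
    intros n; apply (iterate_in_unit n x Hx).
Qed.

Lemma limits_above_subbarrier x : 0 <= x <= L' -> phib x <= phi_lim x /\ psi_lim x <= psib x.
Proof.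
  intros Hx. destruct (iterate_cvg x ltac:(lra)) as [Hp Hq].
  split; [apply (is_lim_seq_lb _ _ _ Hp) | apply (is_lim_seq_ub _ _ _ Hq)];
    intros n; apply (iterate_above_subbarrier n x Hx).
Qed.

Lemma limits_lipschitz : exists C, forall x y,
  Rabs (phi_lim x - phi_lim y) <= C * Rabs (x - y) /\ Rabs (psi_lim x - psi_lim y) <= C * Rabs (x - y).
Proof.
  destruct iterate_lipschitz as [C [HC Hlip]]. exists C. intros x y.
  assert (Hcl : forall z, phi_lim (clamp 0 L z) = phi_lim z /\ psi_lim (clamp 0 L z) = psi_lim z).
  { intros z. unfold phi_lim, psi_lim.
    now rewrite (clamp_id 0 L (clamp 0 L z)) by (apply clamp_in; lra). }
  destruct (Hcl x) as [<- <-]. destruct (Hcl y) as [<- <-].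
  pose proof (clamp_in 0 L x ltac:(lra)) as Hx. pose proof (clamp_in 0 L y ltac:(lra)) as Hy.
  pose proof (Rmult_le_compat_l _ _ _ HC (clamp_lipschitz 0 L x y ltac:(lra))) as Hxy.
  pose proof (lipschitz_of_pointwise_limit phi_iter phi_lim 0 L C
    (fun n x y Hx Hy => proj1 (Hlip n x y Hx Hy)) (fun x Hx => proj1 (iterate_cvg x Hx))) as Lp.
  pose proof (lipschitz_of_pointwise_limit psi_iter psi_lim 0 L C
    (fun n x y Hx Hy => proj2 (Hlip n x y Hx Hy)) (fun x Hx => proj2 (iterate_cvg x Hx))) as Lq.
  split; eapply Rle_trans; [apply Lp | | apply Lq |]; eauto.
Qed.

Lemma continuous_limits x : continuous phi_lim x /\ continuous psi_lim x.
Proof.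
  destruct limits_lipschitz as [C HC].
  split; apply continuous_of_lipschitz with C; intros y; apply HC.
Qed.

Lemma iterate_uniform_cvg :
  uniform_cvg_on 0 L (fun n x => reaction M a (phi_iter n x) (psi_iter n x))
    (fun x => reaction M a (phi_lim x) (psi_lim x)) /\
  uniform_cvg_on 0 L (fun n x => reaction M b (psi_iter n x) (phi_iter n x))
    (fun x => reaction M b (psi_lim x) (phi_lim x)).
Proof.
  destruct iterate_lipschitz as [C [_ Hlip]].
  pose proof (uniform_cvg_of_equi_lipschitz phi_iter phi_lim 0 L C
    (fun n x y Hx Hy => proj1 (Hlip n x y Hx Hy)) (fun x Hx => proj1 (iterate_cvg x Hx))) as Hp.
  pose proof (uniform_cvg_of_equi_lipschitz psi_iter psi_lim 0 L C
    (fun n x y Hx Hy => proj2 (Hlip n x y Hx Hy)) (fun x Hx => proj2 (iterate_cvg x Hx))) as Hq.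
  split; apply uniform_cvg_reaction; auto; try lra; intros;
    [apply iterate_in_unit | apply limits_in_unit | apply and_comm, iterate_in_unit
    | apply and_comm, limits_in_unit]; auto.
Qed.

Definition phi := dirichlet k L 0 (fun x => reaction M a (phi_lim x) (psi_lim x)).
Definition psi := dirichlet k L 1 (fun x => reaction M b (psi_lim x) (phi_lim x)).

Lemma continuous_reaction_limits x :
  continuous (fun y => reaction M a (phi_lim y) (psi_lim y)) x /\
  continuous (fun y => reaction M b (psi_lim y) (phi_lim y)) x.
Proof. destruct (continuous_limits x). split; now apply continuous_reaction. Qed.

Lemma solves_phi_psi :
  solves M phi (fun x => reaction M a (phi_lim x) (psi_lim x)) /\
  solves M psi (fun x => reaction M b (psi_lim x) (phi_lim x)).
Proof.
  exact (conj (solves_dirichlet k L 0 _ Hk HL (fun x => proj1 (continuous_reaction_limits x)))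
              (solves_dirichlet k L 1 _ Hk HL (fun x => proj2 (continuous_reaction_limits x)))).
Qed.

Lemma limits_fixed_point x : 0 <= x <= L -> phi_lim x = phi x /\ psi_lim x = psi x.
Proof.
  intros Hx. destruct (iterate_cvg x Hx) as [Hp Hq]. destruct iterate_uniform_cvg as [Up Uq].
  apply is_lim_seq_incr_1 in Hp, Hq.
  assert (Hn : forall n y, continuous (fun z => reaction M a (phi_iter n z) (psi_iter n z)) y /\
                           continuous (fun z => reaction M b (psi_iter n z) (phi_iter n z)) y).
  { intros n y. destruct (solves_iterate n) as [[Cp Cq] _]. split; now apply continuous_reaction. }
  split; [apply (is_lim_seq_unique_R _ _ _ Hp) | apply (is_lim_seq_unique_R _ _ _ Hq)].
  - exact (dirichlet_uniform_limit k L Hk HL 0 _ _ x Hx (fun n y => proj1 (Hn n y))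
             (fun y => proj1 (continuous_reaction_limits y)) Up).
  - exact (dirichlet_uniform_limit k L Hk HL 1 _ _ x Hx (fun n y => proj2 (Hn n y))
             (fun y => proj2 (continuous_reaction_limits y)) Uq).
Qed.

Lemma barrier_bounds x : 0 < x < L -> 0 < phi x < 1 /\ 0 < psi x < 1.
Proof.
  intros Hx. destruct solves_phi_psi as [Sp Sq].
  destruct Hsub as [_ [Hi _]].
  assert (Hbd : phi 0 = 0 /\ phi L = 0 /\ psi 0 = 1 /\ psi L = 1)
    by (unfold phi, psi; now rewrite !dirichlet_0, !dirichlet_L).
  assert (Hreact : forall y, 0 < y < L ->
            0 <= reaction M a (phi_lim y) (psi_lim y) <= M * 1 /\
            0 <= reaction M b (psi_lim y) (phi_lim y) <= M * 1).
  { intros y Hy. destruct (limits_in_unit y ltac:(lra)). rewrite Rmult_1_r.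
    split; apply reaction_bounds; lra. }
  (* at a point [c] of [(0, L')] the subbarrier already keeps [phi] and [psi] strictly inside *)
  set (c := Rmin x (L' / 2)).
  assert (Hc : 0 < c < L' /\ c <= x).
  { unfold c. pose proof (Rmin_l x (L' / 2)). pose proof (Rmin_r x (L' / 2)).
    assert (0 < Rmin x (L' / 2)) by (apply Rmin_pos; lra). lra. }
  destruct (limits_fixed_point c ltac:(lra)) as [Ep Eq].
  destruct (limits_above_subbarrier c ltac:(lra)).
  destruct (Hi c ltac:(lra)) as [_ [_ [_ [_ [_ [_ [? ?]]]]]]].
  repeat split.
  - apply (solves_lt k c L phi _ _ _ Hk ltac:(lra) Sp (solves_const M 0)); try lra.
    intros y Hy. rewrite Rmult_0_r. apply Hreact. lra.
  - apply (solves_lt k 0 L _ _ phi _ Hk HL (solves_const M 1) Sp); try lra.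
    intros y Hy. apply Hreact. lra.
  - apply (solves_lt k 0 L psi _ _ _ Hk HL Sq (solves_const M 0)); try lra.
    intros y Hy. rewrite Rmult_0_r. apply Hreact. lra.
  - apply (solves_lt k c L _ _ psi _ Hk ltac:(lra) (solves_const M 1) Sq); try lra.
    intros y Hy. apply Hreact. lra.
Qed.

Lemma barrier_of_subbarrier : is_barrier a b L phi psi.
Proof.
  destruct solves_phi_psi as [Sp Sq].
  split; [|split].
  - intros x _. split; apply continuous_on_Icc_of_continuous; eapply continuous_solves; eauto.
  - intros x Hx. destruct (Sp x) as [Dp DDp]. destruct (Sq x) as [Dq DDq].
    destruct (limits_fixed_point x ltac:(lra)) as [Ep Eq]. destruct (barrier_bounds x Hx) as [Bp Bq].
    refine (conj (ex_intro _ _ Dp) (conj (ex_intro _ _ DDp) (conj (ex_intro _ _ Dq)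
             (conj (ex_intro _ _ DDq) (conj _ (conj _ (conj Bp Bq))))))).
    + rewrite (is_derive_unique _ _ _ DDp), Ep, Eq. unfold reaction. ring.
    + rewrite (is_derive_unique _ _ _ DDq), Ep, Eq. unfold reaction. ring.
  - unfold phi, psi. now rewrite !dirichlet_0, !dirichlet_L.
Qed.

End Iteration.

Lemma barrier_exists_mono a b L a' b' L' : 0 < a -> a <= a' -> 0 < b' -> b' <= b ->
  0 < L' -> L' <= L -> barrier_exists a' b' L' -> barrier_exists a b L.
Proof.
  intros Ha Haa' Hb' Hbb' HL' HL'L [phi0 [psi0 Hbar]].
  eexists _, _. apply (barrier_of_subbarrier a b L L' phi0 psi0); try lra.
  exact (barrier_is_subbarrier a b a' b' L' phi0 psi0 Haa' Hbb' Hbar).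
Qed.

Theorem proposition1 (abar bbar Lbar : R) :
  0 < abar -> Rmax abar 1 < bbar -> 0 < Lbar ->
  barrier_exists abar bbar Lbar ->
  (forall L : R, Lbar <= L -> barrier_exists abar bbar L) /\
  (forall b : R, bbar <= b -> barrier_exists abar b Lbar) /\
  (forall a : R, 0 < a -> a <= abar -> barrier_exists a bbar Lbar).
Proof.
  intros Ha Hb HL Hbar.
  (* of [Rmax abar 1 < bbar] only [0 < bbar] is needed *)
  assert (Hb0 : 0 < bbar) by (pose proof (Rmax_r abar 1); lra).
  split; [|split].
  - intros L HLL. apply (barrier_exists_mono _ _ _ abar bbar Lbar); auto; lra.
  - intros b Hbb. apply (barrier_exists_mono _ _ _ abar bbar Lbar); auto; lra.
  - intros a Ha' Haa. apply (barrier_exists_mono _ _ _ abar bbar Lbar); auto; lra.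
Qed.
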